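(* Let $(M,d)$ be a compact metric space, $\varphi:M\to M$ continuous, and let $f\in B(M)$ be such that for some fixed $n\ge1$, $\epsilon>0$, $\alpha\ge0$, $$\sup_{x\in M}\sup_{y\in B_n(x,\epsilon)}|f(y)-f(x)|\le\alpha.$$ Then there exists a continuous function $g:M\to\mathbb R$ with $\|f-g\|_\infty\le\alpha$.
   Context: $B(M)$: bounded Borel real functions, $\|f\|_\infty=\sup|f|$; $B_n(x,\epsilon)=\{y\in M:d(\varphi^k(y),\varphi^k(x))<\epsilon,\ 0\le k\le n-1\}$. *)

From HB Require Import structures.
From mathcomp Require Import all_boot all_order all_algebra.
From mathcomp Require Import all_classical all_reals all_analysis.
Set Implicit Arguments. Unset Strict Implicit. Unset Printing Implicit Defensive.
Import Order.TTheory GRing.Theory Num.Theory.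
Import numFieldNormedType.Exports.
Local Open Scope classical_set_scope.
Local Open Scope ring_scope.

Definition bowen_ball (R : realType) (M : metricType R) (phi : M -> M)
  (n : nat) (x : M) (eps : R) : set M :=
  [set y | forall k : nat, (k < n)%N ->
     mdist (iter k phi y) (iter k phi x) < eps].

Definition borel_set (T : topologicalType) (A : set T) : Prop :=
  <<s [set: T], @open T >> A.

Definition borel_fun (T : topologicalType) (R : realType) (f : T -> R) : Prop :=
  forall U : set R, open U -> borel_set (f @^-1` U).

(** The Bowen distance [D x y = sum_(k < n) d(phi^k x, phi^k y)] is continuous
    on [M] and [D x y < eps] forces [y] into the Bowen ball [B_n(x, eps)].
    With [|f| <= B] and [C = 2B/eps], the sup-convolution
    [g x = sup_y (f y - C D x y)] is [C]-Lipschitz for [D], hence continuous,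
    and satisfies [f <= g].  For [D x y < eps] the term [f y - C D x y] is at
    most [f x + alpha] by the oscillation hypothesis, and for [D x y >= eps]
    it is at most [B - 2B <= f x]; hence [g <= f + alpha]. *)
From HB Require Import structures.
From mathcomp Require Import all_boot all_order all_algebra.
From mathcomp Require Import all_classical all_reals all_analysis.
From mathcomp Require Import lra.
Import Order.TTheory GRing.Theory Num.Theory.
Import numFieldNormedType.Exports.
Local Open Scope classical_set_scope.
Local Open Scope ring_scope.

Definition lipschitz_envelope (R : realType) (T : Type) (D : T -> T -> R)
    (C : R) (f : T -> R) (x : T) : R :=
  sup (range (fun y => f y - C * D x y)).
Arguments lipschitz_envelope {R T}.

Section lipschitz_envelope.
Context {R : realType} {T : Type} {D : T -> T -> R} {C B : R} {f : T -> R}.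
Hypotheses (D_ge0 : forall x y, 0 <= D x y) (Dxx : forall x, D x x = 0)
  (D_sym : forall x y, D x y = D y x)
  (D_triangle : forall x y z, D x z <= D x y + D y z)
  (C_ge0 : 0 <= C) (f_bounded : forall x, `|f x| <= B).

Local Notation g := (lipschitz_envelope D C f).

Let penalized_has_ubound x : has_ubound (range (fun y => f y - C * D x y)).
Proof.
exists B => _ [y _ <-]; rewrite lerBlDr.
apply: le_trans (le_trans (ler_norm _) (f_bounded y)) _.
by rewrite lerDl mulr_ge0.
Qed.

Let penalized_nonempty x : range (fun y => f y - C * D x y) !=set0.
Proof. by exists (f x - C * D x x), x. Qed.

Lemma lipschitz_envelope_ge x : f x <= g x.
Proof. by apply: ub_le_sup => //; exists x => //; rewrite Dxx mulr0 subr0. Qed.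

Lemma lipschitz_envelope_le x b :
  (forall y, f y - C * D x y <= b) -> g x <= b.
Proof. by move=> fb; apply: ge_sup => // _ [y _ <-]. Qed.

Lemma lipschitz_envelope_lipschitz x x' : `|g x - g x'| <= C * D x x'.
Proof.
suff gle a b : g a <= g b + C * D a b.
  have := gle x x'; have := gle x' x; rewrite (D_sym x' x) ler_norml.
  by move=> ? ?; apply/andP; split; lra.
apply: lipschitz_envelope_le => y.
have gb : f y - C * D b y <= g b by apply: ub_le_sup => //; exists y.
have Dby : C * D b y <= C * D b a + C * D a y.
  by rewrite -mulrDr ler_wpM2l.
rewrite (D_sym b a) in Dby; lra.
Qed.

Lemma lipschitz_envelope_le_add x eps alpha :
  (forall y, D x y < eps -> f y <= f x + alpha) ->
  2 * B <= C * eps -> 0 <= alpha -> g x <= f x + alpha.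
Proof.
move=> f_osc CB alpha_ge0; apply: lipschitz_envelope_le => y.
have CD_ge0 : 0 <= C * D x y by rewrite mulr_ge0.
have [Dlt|Dge] := ltP (D x y) eps; first by have := f_osc y Dlt; lra.
have : C * eps <= C * D x y by rewrite ler_wpM2l.
have := f_bounded x; have := f_bounded y; rewrite !ler_norml.
move=> /andP[_ fyB] /andP[fxB _]; lra.
Qed.

End lipschitz_envelope.

Lemma lipschitz_dist_continuous {R : realType} {T : topologicalType}
    {D : T -> T -> R} {C : R} {g : T -> R} :
  0 < C -> (forall x y, `|g x - g y| <= C * D x y) ->
  (forall x e, 0 < e -> \forall y \near x, D x y < e) -> continuous g.
Proof.
move=> C_gt0 g_lip D_near x; apply/(@cvgrPdist_lt R R^o) => e e_gt0.
apply: filterS (D_near x (e / C) (divr_gt0 e_gt0 C_gt0)) => y Dxy.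
by rewrite (le_lt_trans (g_lip x y)) // -ltr_pdivlMl // mulrC.
Qed.

Lemma continuous_iter {T : topologicalType} {f : T -> T} k :
  continuous f -> continuous (iter k f).
Proof.
move=> f_cont; elim: k => [|k IH] x /=; first exact: cvg_id.
exact: (continuous_comp (IH x) (f_cont _)).
Qed.

Section bowen_dist.
Context {R : realType} {M : metricType R} (phi : M -> M).

Definition bowen_dist (n : nat) (x y : M) : R :=
  \sum_(k < n) mdist (iter k phi x) (iter k phi y).

Lemma bowen_dist_ge0 n x y : 0 <= bowen_dist n x y.
Proof. by apply: sumr_ge0 => k _; apply: mdist_ge0. Qed.

Lemma bowen_distxx n x : bowen_dist n x x = 0.
Proof. by apply: big1 => k _; apply: mdistxx. Qed.

Lemma bowen_dist_sym n x y : bowen_dist n x y = bowen_dist n y x.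
Proof. by apply: eq_bigr => k _; apply: metric_sym. Qed.

Lemma bowen_dist_triangle n x y z :
  bowen_dist n x z <= bowen_dist n x y + bowen_dist n y z.
Proof. by rewrite -big_split /=; apply: ler_sum => k _; apply: metric_triangle. Qed.

Lemma mdist_iter_le_bowen_dist {n k} x y : (k < n)%N ->
  mdist (iter k phi x) (iter k phi y) <= bowen_dist n x y.
Proof.
move=> kn; rewrite /bowen_dist (bigD1 (Ordinal kn)) //= lerDl.
by apply: sumr_ge0 => i _; apply: mdist_ge0.
Qed.

Lemma bowen_ball_of_dist_lt n x y eps :
  bowen_dist n x y < eps -> bowen_ball phi n x eps y.
Proof.
move=> Dxy k kn; rewrite metric_sym.
exact: le_lt_trans (mdist_iter_le_bowen_dist x y kn) Dxy.
Qed.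

Hypothesis phi_cont : continuous phi.

Lemma bowen_dist_near n x e : 0 < e -> \forall y \near x, bowen_dist n x y < e.
Proof.
elim: n e => [|n IH] e e_gt0.
  by apply: nearW => y; rewrite /bowen_dist big_ord0.
have e2_gt0 : 0 < e / 2 by rewrite divr_gt0.
apply: filterS2 (IH _ e2_gt0)
  (metricType_numDomainType.cvgr_dist_lt (continuous_iter n phi_cont x) e2_gt0) => y Dy dy.
by rewrite /bowen_dist big_ord_recr /= [e]splitr ltrD.
Qed.

End bowen_dist.

Theorem lemma6p4 (R : realType) (M : metricType R) (phi : M -> M) (f : M -> R)
  (n : nat) (eps alpha : R) :
  compact [set: M] -> continuous phi ->
  borel_fun f -> bounded_fun f ->
  (1 <= n)%N -> 0 < eps -> 0 <= alpha ->
  (forall x y, bowen_ball phi n x eps y -> `|f y - f x| <= alpha) ->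
  exists g : M -> R, continuous g /\ (forall x, `|f x - g x| <= alpha).
Proof.
move=> _ phi_cont _ f_bdd _ eps_gt0 alpha_ge0 f_osc.
have [B B_gt0 f_lt_B] := ex_strict_bound_gt0 f_bdd.
have f_le_B x : `|f x| <= B by apply/ltW/f_lt_B.
pose C := 2 * B / eps.
have C_gt0 : 0 < C by rewrite divr_gt0 // mulr_gt0.
have C_ge0 := ltW C_gt0.
have CE : 2 * B <= C * eps by rewrite /C divfK // gt_eqF.
have D_ge0 := bowen_dist_ge0 phi n.
pose g := lipschitz_envelope (bowen_dist phi n) C f.
exists g; split.
  apply: lipschitz_dist_continuous C_gt0 _ (bowen_dist_near _ phi_cont n).
  exact: lipschitz_envelope_lipschitz D_ge0 (bowen_dist_sym phi n)
    (bowen_dist_triangle phi n) C_ge0 f_le_B.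
move=> x; have f_le_g : f x <= g x.
  exact: lipschitz_envelope_ge D_ge0 (bowen_distxx phi n) C_ge0 f_le_B x.
have g_le : g x <= f x + alpha.
  apply: (lipschitz_envelope_le_add D_ge0 C_ge0 f_le_B x eps alpha _ CE alpha_ge0).
  by move=> y /bowen_ball_of_dist_lt /f_osc; rewrite ler_norml lerBlDl => /andP[_].
by rewrite ler_distl lerBlDr g_le (le_trans f_le_g) ?lerDl.
Qed.
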